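(* Let $I,S\ge 0$ and $j\ge 2$ be integers with $I>S$, $I+S$ odd and $j=\frac{I-S-1}{2}$, and consider the pairing process described in the context. For $1\le h\le I$, let $N_\dagger(I,S,h)$ be the number of distinct sets of bb-pairings that arise as the set of bb-pairings of a possible wiring in which $b_h$ is left unpaired. Then: $N_\dagger(I,S,I)=\frac{1}{j!}\prod_{k=0}^{j-1}\binom{I-1-2k}{2}$; $N_\dagger(I,S,I-1)=\frac{1}{(j-1)!}(I-2)\prod_{k=0}^{j-2}\binom{I-3-2k}{2}$; for $S+1\le h\le I-2$: $N_\dagger(I,S,h)=0$ if $j<I-h$, $N_\dagger(I,S,h)=\frac{1}{(j-I+h)!}\prod_{t=1}^{I-h}(h-t)$ if $j=I-h$, and $N_\dagger(I,S,h)=\frac{1}{(j-I+h)!}\prod_{t=1}^{I-h}(h-t)\prod_{t=1}^{j-I+h}\binom{2h-I-1-2(t-1)}{2}$ if $j>I-h$; and $N_\dagger(I,S,h)=0$ for $h\le S$.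
   Context: Pairing process: there are $I$ infected devices $b_1,\dots,b_I$ and $S$ clean devices $w_1,\dots,w_S$. For $t=1,\dots,I$ in this order: if $b_t$ is not yet paired and at least one device other than $b_t$ is not yet paired, then $b_t$ chooses one of the currently unpaired devices other than itself uniformly at random, independently of previous choices, and becomes paired with it; otherwise $b_t$ does nothing. Each device belongs to at most one pair. The wiring is the final set of pairs; a bb-pairing is a pair consisting of two infected devices; a wiring is possible if it occurs with positive probability. Under the hypotheses, every possible wiring with exactly $j$ bb-pairings leaves exactly one infected device unpaired. *)

From mathcomp Require Import all_boot all_algebra.
Set Implicit Arguments. Unset Strict Implicit. Unset Printing Implicit Defensive.

(* Devices: inl i is the infected device b_(i+1) (0-based index i < I),
   inr k is the clean device w_(k+1).  A (partial) wiring is a set of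
   2-element sets of devices. *)
Definition dev (I S : nat) := ('I_I + 'I_S)%type.

Definition infected I S (x : dev I S) : bool := if x is inl _ then true else false.

Definition paired I S (M : {set {set dev I S}}) (x : dev I S) : bool :=
  [exists p in M, x \in p].

(* All possible outcomes (positive-probability) of the move of device b
   from the current set of pairs M. *)
Definition step I S (b : dev I S) (M : {set {set dev I S}}) : {set {set {set dev I S}}} :=
  let U := [set y | (y != b) && ~~ paired M y] in
  if paired M b || (U == set0) then [set M]
  else [set [set b; y] |: M | y in U].

(* reachable I S t : the sets of pairs that occur with positive probability
   after infected devices b_1, ..., b_t have acted (in this order). *)
Fixpoint reachable I S (t : nat) : {set {set {set dev I S}}} :=
  match t with
  | 0 => [set set0]
  | t'.+1 =>
      let R := reachable I S t' in
      if (insub t' : option 'I_I) is Some i then \bigcup_(M in R) step (inl i : dev I S) M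
      else R
  end.

Definition possible_wiring I S (M : {set {set dev I S}}) : bool :=
  M \in reachable I S I.

Definition bb_pairings I S (M : {set {set dev I S}}) : {set {set dev I S}} :=
  [set p in M | [forall x in p, infected x]].

(* N_dagger I S h, for 1 <= h <= I: number of distinct sets of bb-pairings of
   possible wirings in which b_h is unpaired (b_h is inl (h-1)). *)
Definition N_dagger I S (h : nat) : nat :=
  if (insub h.-1 : option 'I_I) is Some i then
    #|[set B : {set {set dev I S}} | [exists M, possible_wiring M &&
        ~~ paired M (inl i : dev I S) && (B == bb_pairings M)]]|
  else 0.

From mathcomp Require Import all_boot all_algebra.
From mathcomp Require Import zify ring.
Set Implicit Arguments. Unset Strict Implicit. Unset Printing Implicit Defensive.

(* A possible wiring leaving b_h unpaired is the same thing as a perfect matching of the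
   other devices in which every pair contains some b_s with s < h: each pair is formed by
   the earlier of its infected members, and b_h finds nobody left when its turn comes.
   The bb-pairings of such a wiring are disjoint pairs of infected devices, each meeting
   the h - 1 devices before b_h and together covering the I - h devices after it; the S
   clean devices are paired with S of the remaining early ones, which forces exactly j
   bb-pairings, and conversely any such j pairs extend to a wiring in this way.  Matching
   the late devices one by one into the early ones gives (h - 1)^_(I - h) choices, and the
   remaining j - (I - h) pairs are any disjoint pairs among the m = 2h - I - 1 unused early
   devices, of which there are prod_(t < k) C(m - 2t, 2) / k! for k pairs. *)

Lemma card_partition_by (U J : finType) (P : pred U) (D : {pred J}) (Q : J -> pred U) :
  (forall B, P B -> \sum_(z in D) Q z B = 1) ->
  #|[set B | P B]| = \sum_(z in D) #|[set B | P B && Q z B]|.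
Proof.
move=> PQ; rewrite -sum1_card.
under [RHS]eq_bigr => z _ do rewrite -sum1_card big_mkcond.
rewrite exchange_big /= big_mkcond; apply: eq_bigr => B _.
rewrite inE; case: (boolP (P B)) => [PB | PNB].
  by rewrite -[LHS](PQ B PB); apply: eq_bigr => z _; rewrite inE PB; case: (Q z B).
by rewrite big1 // => z _; rewrite inE (negbTE PNB).
Qed.

Lemma card_containing (U : finType) (x : U) (P Q : pred {set U}) :
  (forall B', Q B' -> x \notin B' /\ P (x |: B')) ->
  (forall B, P B -> x \in B -> Q (B :\ x)) ->
  #|[set B | P B & x \in B]| = #|[set B | Q B]|.
Proof.
move=> QP PQ; rewrite -(@card_in_imset _ _ (fun B => x |: B) [set B | Q B]); last first.
  move=> B1 B2; rewrite !inE => /QP[x1 _] /QP[x2 _] eqB.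
  by rewrite -(setU1K x1) eqB setU1K.
apply: eq_card => B; rewrite inE; apply/andP/imsetP => [[PB xB] | [B' + ->]].
  by exists (B :\ x); rewrite ?inE ?PQ ?setD1K.
by rewrite inE => /QP[_ PB']; rewrite setU11.
Qed.

(* The number of sets of [k] disjoint pairs in an [m]-element set: the first point is
   either unmatched or matched with one of the other [m - 1]. *)
Fixpoint npairings (m k : nat) {struct m} : nat :=
  match k, m with
  | 0, _ => 1
  | k'.+1, (m'.+1 as m1).+1 => npairings m1 k'.+1 + m1 * npairings m' k'
  | _.+1, _ => 0
  end.

Lemma npairings0 m : npairings m 0 = 1.
Proof. by case: m. Qed.

Lemma npairingsSS m k : npairings m.+1 k.+1 = npairings m k.+1 + m * npairings m.-1 k.
Proof. by case: m. Qed.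

Lemma npairings_ffact m k : 2 ^ k * k`! * npairings m k = m ^_ (2 * k).
Proof.
elim/ltn_ind: m k => m IH [|k]; first by rewrite npairings0.
case: m IH => [_ | m IH]; first by rewrite muln0 ffact0n mulnS.
rewrite npairingsSS mulnDr IH //.
have -> : 2 ^ k.+1 * k.+1`! * (m * npairings m.-1 k) = 2 * k.+1 * (m * m.-1 ^_ (2 * k)).
  by rewrite -(IH m.-1) ?(leq_ltn_trans (leq_pred m)) // factS expnS; ring.
rewrite -ffactnS (_ : 2 * k.+1 = (2 * k).+2); last by lia.
rewrite ffactnSr ffactSS; case: (ltnP m (2 * k).+1) => m2k.
  by rewrite ffact_small // !(muln0, mul0n).
by rewrite [_ * m ^_ _]mulnC -mulnDr mulnC; congr (_ * _); lia.
Qed.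

Lemma prod_bin2_ffact m k : 2 ^ k * \prod_(t < k) 'C(m - 2 * t, 2) = m ^_ (2 * k).
Proof.
elim: k m => [|k IH] m; first by rewrite big_ord0.
rewrite big_ord_recl /= muln0 subn0.
have -> : \prod_(t < k) 'C(m - 2 * bump 0 t, 2) = \prod_(t < k) 'C(m.-2 - 2 * t, 2).
  by apply: eq_bigr => t _; congr 'C(_, 2); rewrite /bump /=; lia.
set P := \prod_(t < k) _.
rewrite (_ : _ * (_ * P) = 'C(m, 2) * 2`! * (2 ^ k * P)); last first.
  by rewrite expnS (_ : 2`! = 2) //; ring.
rewrite bin_ffact IH (_ : 2 * k.+1 = (2 * k).+2); last by lia.
by rewrite !ffactnS ffactn0 muln1 !mulnA.
Qed.

Lemma npairings_prod m k : k`! * npairings m k = \prod_(t < k) 'C(m - 2 * t, 2).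
Proof.
apply/eqP; rewrite -(@eqn_pmul2l (2 ^ k)) ?expn_gt0 //.
by rewrite mulnA npairings_ffact prod_bin2_ffact.
Qed.

Section Matchings.
Variable T : finType.
Implicit Types (A L D p : {set T}) (B : {set {set T}}).

Lemma trivIset0 : trivIset (set0 : {set {set T}}).
Proof. by rewrite /trivIset /cover !big_set0 cards0. Qed.

Lemma cover_setU1 p B : cover (p |: B) = p :|: cover B.
Proof. by rewrite /cover bigcup_setU big_set1. Qed.

Lemma card_cover_pairs B : trivIset B -> {in B, forall p, #|p| = 2} -> #|cover B| = 2 * #|B|.
Proof.
move=> tB cB; rewrite -(eqP tB) (eq_bigr (fun=> 2)) => [|p /cB //].
by rewrite sum_nat_const mulnC.
Qed.

Lemma pblocks_mem B x : trivIset B -> x \in cover B -> [set p in B | x \in p] = [set pblock B x].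
Proof.
move=> tB xB; apply/setP=> p; rewrite !inE.
apply/andP/eqP=> [[pB xp] | ->]; first exact/esym/def_pblock.
by rewrite pblock_mem ?mem_pblock.
Qed.

Lemma pblocks_notin B x : x \notin cover B -> [set p in B | x \in p] = set0.
Proof.
move=> xNB; apply/setP=> p; rewrite !inE; apply/negbTE/andP=> -[pB xp].
by case/negP: xNB; apply/bigcupP; exists p.
Qed.

Lemma sum_mem_cover B x : trivIset B -> \sum_(p in B) (x \in p) = (x \in cover B).
Proof.
move=> tB; case: (boolP (x \in cover B)) => [xB | xNB]; last first.
  by rewrite big1 // => p pB; apply/eqP; rewrite eqb0; apply: contra xNB => xp;
     apply/bigcupP; exists p.
rewrite (bigD1 (pblock B x)) ?pblock_mem //= mem_pblock xB big1 // => p /andP[pB].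
by apply: contraNeq; rewrite eqb0 negbK => xp; rewrite (def_pblock tB pB xp).
Qed.

Lemma card_cover_setI B D : trivIset B -> #|cover B :&: D| = \sum_(p in B) #|p :&: D|.
Proof.
move=> tB; under [RHS]eq_bigr => p _ do rewrite -sum1_card big_mkcond.
rewrite exchange_big /= -sum1_card big_mkcond /=; apply: eq_bigr => x _.
rewrite inE; case xD: (x \in D); rewrite ?andbT ?andbF.
  transitivity (nat_of_bool (x \in cover B)); first by case: (x \in cover B).
  by rewrite -(sum_mem_cover x tB); apply: eq_bigr => p _; rewrite inE xD andbT.
by rewrite big1 // => p _; rewrite inE xD andbF.
Qed.

Definition anchored_pair A L p := [&& #|p| == 2, p \subset A :|: L & ~~ [disjoint p & A]].

Definition matching A L B :=
  [&& trivIset B, L \subset cover B & [forall p in B, anchored_pair A L p]].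

Definition nmatchings A L n := #|[set B | matching A L B & #|B| == n]|.

Lemma matchingP A L B :
  reflect [/\ trivIset B, L \subset cover B & {in B, forall p, anchored_pair A L p}]
          (matching A L B).
Proof.
by apply: (iffP and3P) => [[tB LB /forall_inP aB] | [tB LB aB]]; split=> //;
   apply/forall_inP.
Qed.

Lemma anchored_pair_setD A L p q :
  anchored_pair (A :\: p) (L :\: p) q = [disjoint p & q] && anchored_pair A L q.
Proof.
rewrite /anchored_pair -setDUl subsetD.
case: (boolP [disjoint p & q]) => [pq | pNq]; last first.
  by rewrite [[disjoint q & p]]disjoint_sym (negbTE pNq) andbF /= andbF.
rewrite [[disjoint q & p]]disjoint_sym pq andbT -!setI_eq0 setIDA (setDidPl _) //.
by apply: disjointWl (subsetIl q A) _; rewrite disjoint_sym.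
Qed.

Lemma anchored_pair_card A L p : anchored_pair A L p -> #|p| = 2.
Proof. by case/and3P=> /eqP. Qed.

Lemma anchored_pair_neq0 A L p : anchored_pair A L p -> p != set0.
Proof. by move/anchored_pair_card=> cp; apply/eqP=> p0; rewrite p0 cards0 in cp. Qed.

Lemma nmatchings_pair A L p n : anchored_pair A L p ->
  #|[set B | matching A L B && (#|B| == n.+1) & p \in B]|
    = nmatchings (A :\: p) (L :\: p) n.
Proof.
move=> ap; apply: card_containing => [B' | B].
  case/andP=> /matchingP[tB' LB' aB'] /eqP cB'.
  have pB' : {in B', forall q : {set T}, [disjoint p & q]}.
    by move=> q /aB'; rewrite anchored_pair_setD => /andP[].
  have nB'0 : set0 \notin B'.
    by apply/negP=> /aB' /anchored_pair_neq0; rewrite eqxx.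
  have [tB pNB'] := trivIsetU1 pB' tB' nB'0.
  split=> //; rewrite cardsU1 pNB' cB' eqxx andbT; apply/matchingP; split=> //.
    by rewrite cover_setU1 -subDset.
  by move=> q /setU1P[-> // | /aB']; rewrite anchored_pair_setD => /andP[].
case/andP=> /matchingP[tB LB aB] /eqP cB pB; apply/andP; split; last first.
  by move: cB; rewrite (cardsD1 p B) pB add1n => -[->].
apply/matchingP; split; first exact: trivIsetD.
  by rewrite coverD1 // setSD.
move=> q /setD1P[qp qB]; rewrite anchored_pair_setD aB // andbT.
by move/trivIsetP: tB; apply; rewrite // eq_sym.
Qed.

Lemma pair_of_mem p y : #|p| = 2 -> y \in p -> exists2 z, z != y & p = [set y; z].
Proof.
move/eqP/cards2P=> [a [b [ab ->]]] /set2P[-> | ->]; first by exists b; rewrite // eq_sym.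
by exists a; rewrite // setUC.
Qed.

Lemma sum_partner B y D : trivIset B -> {in B, forall p, #|p| = 2} ->
  y \notin D -> (forall z, [set y; z] \in B -> z \in D) ->
  \sum_(z in D) ([set y; z] \in B) = (y \in cover B).
Proof.
move=> tB cB yD Dpartner.
case: (boolP (y \in cover B)) => [yB | yNB]; last first.
  rewrite big1 // => z _; apply/eqP; rewrite eqb0; apply: contra yNB => yzB.
  by apply/bigcupP; exists [set y; z]; rewrite ?setU11.
have pB := pblock_mem yB; have yp : y \in pblock B y by rewrite mem_pblock.
have [z0 _ def_p] := pair_of_mem (cB _ pB) yp.
have z0D : z0 \in D by apply: Dpartner; rewrite -def_p.
rewrite (bigD1 z0) //= -def_p pB big1 // => z /andP[zD zz0]; apply/eqP; rewrite eqb0.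
apply: contra zz0 => yzB; have := def_pblock tB yzB (setU11 _ _).
rewrite def_p => /setP/(_ z); rewrite !inE eqxx orbT => /orP[/eqP zy | //].
by rewrite -zy zD in yD.
Qed.

Lemma matching_partner A L B y z : matching A L B -> y \notin A -> [set y; z] \in B -> z \in A.
Proof.
case/matchingP=> _ _ aB yA /aB /and3P[_ _ /pred0Pn[a /andP[/set2P[-> | ->] aA]]] //.
by case/negP: yA.
Qed.

Lemma nmatchings_late A L y n : [disjoint A & L] -> y \in L ->
  nmatchings A L n.+1 = \sum_(z in A) nmatchings (A :\ z) (L :\ y) n.
Proof.
move=> AL yL; have yA : y \notin A by rewrite (disjointFl AL yL).
rewrite /nmatchings (@card_partition_by _ _ (fun B => matching A L B && (#|B| == n.+1))
  A (fun z B => [set y; z] \in B)); last first.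
  move=> B /andP[mB _]; case/matchingP: (mB) => tB LB aB.
  have cB : {in B, forall p, #|p| = 2} by move=> p /aB /anchored_pair_card.
  by rewrite (sum_partner tB cB yA (fun z => matching_partner mB yA)) (subsetP LB _ yL).
apply: eq_bigr => z zA; rewrite nmatchings_pair; last first.
  have yz : y != z by apply: contraNneq yA => ->.
  rewrite /anchored_pair cards2 yz /= subUset !sub1set !inE yL zA orbT /=.
  by apply/pred0Pn; exists z; rewrite !inE eqxx orbT.
congr nmatchings; apply/setP=> x; rewrite !inE.
  by case: eqP => [-> | _]; rewrite ?(negbTE yA) ?andbF.
by case: (eqVneq x y) => //= _; case: (eqVneq x z) => // ->; rewrite (disjointFr AL zA).
Qed.

Lemma matching_cover A L B : matching A L B -> cover B \subset A :|: L.
Proof. by case/matchingP=> _ _ aB; apply/bigcupsP=> p /aB /and3P[]. Qed.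

Lemma matching_setD1 A B y : y \notin cover B -> matching (A :\ y) set0 B = matching A set0 B.
Proof.
move=> yB; rewrite /matching; congr [&& _, _ & _]; apply: eq_forallb_in => q qB.
rewrite -{1}(set0D [set y]) anchored_pair_setD disjoints1.
by rewrite (contra _ yB) // => yq; apply/bigcupP; exists q.
Qed.

Lemma nmatchings_early A y n : y \in A ->
  nmatchings A set0 n.+1
    = nmatchings (A :\ y) set0 n.+1 + \sum_(z in A :\ y) nmatchings (A :\ y :\ z) set0 n.
Proof.
move=> yA; rewrite /nmatchings -(cardsID [set B | y \notin cover B]); congr (_ + _).
  apply: eq_card => B; rewrite !inE.
  case: (boolP (y \in cover B)) => [yB | yNB]; last by rewrite andbT matching_setD1.
  rewrite andbF; apply/esym/negbTE; rewrite negb_and; apply/orP; left; apply/negP.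
  by move/matching_cover/subsetP/(_ y yB); rewrite setU0 !inE eqxx.
rewrite (@eq_card _ _ [set B | (matching A set0 B && (#|B| == n.+1)) && (y \in cover B)]);
  last by move=> B; rewrite !inE negbK andbC.
rewrite (@card_partition_by _ _ (fun B => (matching A set0 B && (#|B| == n.+1))
  && (y \in cover B)) (A :\ y) (fun z B => [set y; z] \in B)); last first.
  move=> B /andP[/andP[mB _] yB]; case/matchingP: (mB) => tB _ aB.
  have cB : {in B, forall p, #|p| = 2} by move=> p /aB /anchored_pair_card.
  rewrite (sum_partner tB cB) ?yB ?setD11 // => z yzB; rewrite !inE.
  have zy : z != y by apply/eqP=> zy; move: (cB _ yzB); rewrite zy setUid cards1.
  rewrite zy /=.
  by have /subsetP/(_ z) := matching_cover mB; rewrite setU0; apply; apply/bigcupP;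
     exists [set y; z]; rewrite // !inE eqxx orbT.
apply: eq_bigr => z; rewrite !inE => /andP[zy zA].
have -> : A :\ y :\ z = A :\: [set y; z].
  by apply/setP=> x; rewrite !inE negb_or andbA [(x != y) && _]andbC.
rewrite -{2}(set0D [set y; z]) -/(nmatchings _ _ n) -nmatchings_pair; last first.
  rewrite /anchored_pair cards2 (eq_sym y z) zy setU0 subUset !sub1set yA zA /=.
  by apply/pred0Pn; exists y; rewrite !inE eqxx.
apply: eq_card => B; rewrite !inE; case: (boolP ([set y; z] \in B)) => yzB; rewrite ?andbF //.
have yB : y \in cover B by apply/bigcupP; exists [set y; z]; rewrite ?setU11.
by rewrite !andbT yB andbT.
Qed.

Lemma nmatchings_uncovered A L : L != set0 -> nmatchings A L 0 = 0.
Proof.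
case/set0Pn=> y yL; apply/eqP; rewrite cards_eq0; apply/eqP/setP=> B; rewrite !inE.
apply/negbTE/andP=> -[/matchingP[_ /subsetP/(_ y yL) + _]].
by rewrite cards_eq0 => + /eqP B0; rewrite B0 /cover big_set0 inE.
Qed.

Lemma nmatchings_set0 A : nmatchings A set0 0 = 1.
Proof.
rewrite /nmatchings -(cards1 (set0 : {set {set T}})); apply: eq_card => B.
rewrite !inE cards_eq0 andbC; case: eqP => // ->; rewrite /matching.
by rewrite trivIset0 sub0set; apply/forall_inP=> p; rewrite inE.
Qed.

Lemma nmatchings_nil L n : nmatchings set0 L n.+1 = 0.
Proof.
apply/eqP; rewrite cards_eq0; apply/eqP/setP=> B; rewrite !inE.
apply/negbTE/andP=> -[/matchingP[_ _ aB] /eqP cB].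
have /set0Pn[p pB] : B != set0 by rewrite -card_gt0 cB.
by case/and3P: (aB p pB) => _ _; rewrite -setI_eq0 setI0 eqxx.
Qed.

Lemma nmatchings_perfect A n : nmatchings A set0 n = npairings #|A| n.
Proof.
move: {2}#|A| (erefl #|A|) => m; elim/ltn_ind: m A n => m IH A [|n] cA.
  by rewrite nmatchings_set0 npairings0.
have [A0 | [y yA]] := set_0Vmem A; first by rewrite A0 nmatchings_nil cards0.
have cAy : #|A :\ y| = m.-1 by rewrite -cA (cardsD1 y A) yA.
have m_gt0 : 0 < m by rewrite -cA card_gt0; apply/set0Pn; exists y.
rewrite (nmatchings_early _ yA) (IH m.-1) ?prednK ?ltn_pred //.
rewrite (eq_bigr (fun=> npairings m.-2 n)) => [|z zAy].
  rewrite sum_nat_const cA cAy; case: m {IH cA cAy} m_gt0 => // m _.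
  by rewrite npairingsSS.
have cAyz : #|A :\ y :\ z| = m.-2 by move: cAy; rewrite (cardsD1 z) zAy; lia.
by rewrite (IH m.-2) ?cAyz //; lia.
Qed.

Lemma nmatchings_formula A L n : [disjoint A & L] ->
  nmatchings A L n =
    if #|L| <= n then #|A| ^_ #|L| * npairings (#|A| - #|L|) (n - #|L|) else 0.
Proof.
have [l cL] : exists l, #|L| = l by eexists.
rewrite cL; elim: l A L n cL => [|l IH] A L n cL AL.
  by move/cards0_eq: cL => ->; rewrite nmatchings_perfect !subn0 mul1n.
have [y yL] : exists y, y \in L by apply/set0Pn; rewrite -card_gt0 cL.
have cLy : #|L :\ y| = l by move: cL; rewrite (cardsD1 y) yL => -[].
case: n => [|n]; first by rewrite nmatchings_uncovered //; apply/set0Pn; exists y.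
rewrite (nmatchings_late _ AL yL) (eq_bigr (fun=> if l <= n
    then #|A|.-1 ^_ l * npairings (#|A|.-1 - l) (n - l) else 0)) => [|z zA].
  rewrite sum_nat_const ltnS; case: ifP => _; last by rewrite muln0.
  by rewrite mulnA -ffactnS; congr (_ * npairings _ _); lia.
rewrite IH ?(cardsD1 z A) ?zA //.
apply/pred0P=> x /=; rewrite !inE.
by case: (boolP (x \in L)) => xL; rewrite ?(disjointFl AL xL) !andbF.
Qed.

End Matchings.

Section Wirings.
Variables I S : nat.
Local Notation dev := (dev I S).
Implicit Types (M B : {set {set dev}}) (i k : 'I_I).

Lemma pairedE M x : paired M x = (x \in cover M).
Proof.
by apply/existsP/bigcupP=> [[p /andP[pM xp]] | [p pM xp]]; exists p; rewrite ?pM.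
Qed.

Lemma reachableS k :
  reachable I S k.+1 = \bigcup_(M in reachable I S k) step (inl k : dev) M.
Proof. by rewrite /= valK. Qed.

Definition pairing M := trivIset M && [forall p in M, #|p| == 2].

Definition initiated t M := [forall p in M, exists s : 'I_I, (s < t) && (inl s \in p)].

Definition wiring_without i M := [&& pairing M, initiated i M & cover M == [set~ inl i]].

(* After [t] moves, an unpaired [b_s] with [s < t] found nobody left to pair with. *)
Definition wiring_invariant t M :=
  [/\ pairing M, initiated t M &
      forall s : 'I_I, s < t -> inl s \notin cover M ->
        cover M = [set~ inl s] /\ initiated s M].

Lemma pairingP M : reflect (trivIset M /\ {in M, forall p : {set dev}, #|p| = 2}) (pairing M).
Proof.
apply: (iffP andP) => [[tM /forall_inP cM] | [tM cM]]; split=> //.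
  by move=> p /cM /eqP.
by apply/forall_inP=> p /cM ->.
Qed.

Lemma initiatedP t M :
  reflect {in M, forall p : {set dev}, exists2 s : 'I_I, s < t & inl s \in p} (initiated t M).
Proof.
apply: (iffP forall_inP) => iM p /iM; first by case/existsP=> s /andP[]; exists s.
by case=> s st sp; apply/existsP; exists s; rewrite st.
Qed.

Lemma initiatedW t t' M : t <= t' -> initiated t M -> initiated t' M.
Proof.
by move=> tt' /initiatedP iM; apply/initiatedP=> p /iM[s st sp]; exists s; rewrite ?(leq_trans st).
Qed.

Lemma wiring_invariant0 : wiring_invariant 0 set0.
Proof.
split=> //; first by apply/pairingP; split=> [|p]; rewrite ?trivIset0 ?inE.
by apply/initiatedP=> p; rewrite inE.
Qed.

Lemma wiring_invariant_stay i M : wiring_invariant i M ->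
  paired M (inl i) || ([set y | (y != inl i) && ~~ paired M y] == set0) ->
  wiring_invariant i.+1 M.
Proof.
case=> pM iM uM stay; split=> //; first exact: initiatedW iM.
move=> s; rewrite ltnS leq_eqVlt => /orP[/eqP/val_inj-> iNM | /uM//].
split=> //; apply/setP=> y; rewrite !inE.
move: stay; rewrite pairedE (negbTE iNM) => /eqP/setP/(_ y); rewrite !inE pairedE.
by case: (eqVneq y (inl i)) => [-> | _] /=; [rewrite (negbTE iNM) | move/negbFE].
Qed.

Lemma wiring_invariant_pair i M y : wiring_invariant i M ->
  inl i \notin cover M -> y != inl i -> y \notin cover M ->
  wiring_invariant i.+1 ([set inl i; y] |: M).
Proof.
case=> /pairingP[tM cM] iM uM iNM yi yNM.
have disj : {in M, forall q : {set dev}, [disjoint [set inl i; y] & q]}.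
  move=> q qM; rewrite disjoint_sym disjoints_subset subsetC subUset !sub1set !inE.
  by apply/andP; split; [apply: contra iNM | apply: contra yNM] => xq;
     apply/bigcupP; exists q.
have nM0 : set0 \notin M by apply/negP=> /cM; rewrite cards0.
have [tM' _] := trivIsetU1 disj tM nM0.
split.
- apply/pairingP; split=> // p /setU1P[-> | /cM //].
  by rewrite cards2 eq_sym yi.
- apply/initiatedP=> p /setU1P[-> | /(initiatedP _ _ (initiatedW (leqnSn i) iM))//].
  by exists i; rewrite ?ltnSn // !inE eqxx.
move=> s si; rewrite cover_setU1 in_setU negb_or => /andP[sNp sNM]; exfalso.
move: si; rewrite ltnS leq_eqVlt => /orP[/eqP/val_inj si | si].
  by rewrite si !inE eqxx in sNp.
have [covM _] := uM s si sNM; case/negP: iNM; rewrite covM !inE.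
by apply: contraTneq si => -[->]; rewrite ltnn.
Qed.

Lemma reachable_invariant t M : t <= I -> M \in reachable I S t -> wiring_invariant t M.
Proof.
elim: t M => [|t IH] M tI; first by rewrite inE => /eqP ->; apply: wiring_invariant0.
rewrite (_ : t.+1 = (Ordinal tI).+1) // reachableS => /bigcupP[M0 /(IH _ (ltnW tI)) inv0].
rewrite /step; case: ifP => [stay | /negbT]; first by rewrite inE => /eqP ->;
  apply: wiring_invariant_stay.
rewrite negb_or pairedE => /andP[iNM _] /imsetP[y]; rewrite inE pairedE => /andP[yi yNM] ->.
exact: wiring_invariant_pair.
Qed.

Lemma possible_wiring_without i M :
  possible_wiring M -> ~~ paired M (inl i) -> wiring_without i M.
Proof.
move=> /(reachable_invariant (leqnn I))[pM _ uM]; rewrite pairedE => iNM.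
by have [covM iM] := uM i (ltn_ord i) iNM; rewrite /wiring_without pM iM covM eqxx.
Qed.

Section Prefix.
Variables (i : 'I_I) (M : {set {set dev}}).
Hypothesis wM : wiring_without i M.

(* The pairs of [M] present after the first [t] moves. *)
Definition prefix t := [set p in M | [exists s : 'I_I, (s < t) && (inl s \in p)]].

Let tM : trivIset M. Proof. by case/and3P: wM => /pairingP[]. Qed.
Let cM : {in M, forall p : {set dev}, #|p| = 2}. Proof. by case/and3P: wM => /pairingP[]. Qed.
Let iM : initiated i M. Proof. by case/and3P: wM. Qed.
Let covM : cover M = [set~ inl i]. Proof. by case/and3P: wM => _ _ /eqP. Qed.

Lemma prefix0 : prefix 0 = set0.
Proof. by apply/setP=> p; rewrite !inE andbC; case: existsP => // -[]. Qed.

Lemma prefix_full : prefix I = M.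
Proof.
apply/setP=> p; rewrite inE andb_idr // => /(initiatedP _ _ iM)[s _ sp].
by apply/existsP; exists s; rewrite ltn_ord.
Qed.

Lemma prefixS k : prefix k.+1 = prefix k :|: [set p in M | inl k \in p].
Proof.
apply/setP=> p; rewrite !inE -andb_orr; congr (_ && _); apply/existsP/orP.
  case=> s /andP[]; rewrite ltnS leq_eqVlt => /orP[/eqP/val_inj-> | sk] sp; [right | left] => //.
  by apply/existsP; exists s; rewrite sk.
case=> [/existsP[s /andP[sk sp]] | kp]; first by exists s; rewrite ltnW.
by exists k; rewrite ltnSn.
Qed.

Lemma prefix_sub t : prefix t \subset M.
Proof. by apply/subsetP=> p; rewrite inE => /andP[]. Qed.

Lemma cover_prefix t x : x \in cover (prefix t) -> pblock M x \in prefix t.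
Proof.
case/bigcupP=> p pP xp; rewrite (def_pblock tM _ xp) //.
exact: subsetP (prefix_sub t) _ pP.
Qed.

Lemma cover_prefix_last y : y != inl i -> y \in cover (prefix i).
Proof.
move=> yi; have yM : y \in cover M by rewrite covM !inE.
have [s si sp] := initiatedP _ _ iM _ (pblock_mem yM).
apply/bigcupP; exists (pblock M y); last by rewrite mem_pblock.
by rewrite inE pblock_mem //=; apply/existsP; exists s; rewrite si.
Qed.

Lemma prefix_step k : prefix k.+1 \in step (inl k) (prefix k).
Proof.
rewrite prefixS /step !pairedE.
have [kP | kNP] := boolP (inl k \in cover (prefix k)).
  rewrite inE; apply/eqP/setUidPl/subsetP=> p; rewrite inE => /andP[pM kp].
  by rewrite -(def_pblock tM pM kp) cover_prefix.
have [-> | ki] := eqVneq k i.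
  rewrite pblocks_notin ?covM ?setC11 // setU0 ifT ?inE //; apply/orP; right.
  by apply/eqP/setP=> y; rewrite !inE pairedE; case: eqVneq => //= /cover_prefix_last ->.
have kM : inl k \in cover M by rewrite covM !inE; apply: contraNneq ki => -[->].
rewrite pblocks_mem //.
have pM := pblock_mem kM; have kp : inl k \in pblock M (inl k) by rewrite mem_pblock.
have [y yk def_p] := pair_of_mem (cM pM) kp.
have yNP : y \notin cover (prefix k).
  have yp : y \in pblock M (inl k) by rewrite def_p !inE eqxx orbT.
  apply: contra kNP => /cover_prefix; rewrite (def_pblock tM pM yp) => pP.
  by apply/bigcupP; exists (pblock M (inl k)).
rewrite ifF; last by apply/negbTE/eqP/setP=> /(_ y); rewrite !inE yk pairedE yNP.
by apply/imsetP; exists y; rewrite ?inE ?yk ?pairedE // setUC -def_p.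
Qed.

Lemma prefix_reachable t : t <= I -> prefix t \in reachable I S t.
Proof.
elim: t => [|t IH] tI; first by rewrite prefix0 inE.
rewrite (_ : t.+1 = (Ordinal tI).+1) // reachableS; apply/bigcupP.
by exists (prefix t); [apply: IH; apply: ltnW | apply: prefix_step].
Qed.

End Prefix.

Lemma wiring_without_possible i M :
  wiring_without i M -> possible_wiring M && ~~ paired M (inl i).
Proof.
move=> wM; rewrite /possible_wiring -{1}(prefix_full wM) (prefix_reachable wM) //= pairedE.
by case/and3P: wM => _ _ /eqP ->; rewrite !inE eqxx.
Qed.

Definition early i : {set dev} := [set x : dev | if x is inl s then s < i else false].
Definition late i : {set dev} := [set x : dev | if x is inl s then i < s else false].
Definition clean : {set dev} := [set x | ~~ infected x].

Lemma early_late i : early i :|: late i = [set inl s | s in [set~ i]].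
Proof.
apply/setP=> -[s | w]; rewrite !inE; last by apply/esym/imsetP=> -[].
by rewrite (mem_imset _ _ (@inl_inj _ _)) !inE neq_ltn orbC.
Qed.

Lemma card_early_late i : #|early i :|: late i| = I.-1.
Proof. by rewrite early_late card_imset ?cardsC1 ?card_ord //; apply: inl_inj. Qed.

Lemma disjoint_early_late i : [disjoint early i & late i].
Proof. by apply/pred0P=> -[s | w] /=; rewrite !inE //; case: ltngtP. Qed.

Lemma card_early i : #|early i| = i.
Proof.
have le_iI : i <= I by apply: ltnW.
rewrite (_ : early i = [set inl (widen_ord le_iI s) | s : 'I_i]).
  by rewrite card_imset ?card_ord // => s t [/val_inj].
apply/setP=> -[s | w]; rewrite !inE; last by apply/esym/imsetP=> -[].
apply/idP/imsetP=> [si | [t _ [->]]] /=; last exact: ltn_ord.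
by exists (Ordinal si) => //; congr inl; apply: val_inj.
Qed.

Lemma card_late i : #|late i| = I.-1 - i.
Proof.
by rewrite -(card_early_late i) cardsU (disjoint_setI0 (disjoint_early_late i))
  cards0 subn0 card_early addKn.
Qed.

Lemma clean_inr : clean = [set inr w | w : 'I_S].
Proof.
by apply/setP=> -[s | w]; rewrite !inE; apply/esym/imsetP; [case | exists w].
Qed.

Lemma card_clean : #|clean| = S.
Proof. by rewrite clean_inr card_imset ?card_ord //; apply: inr_inj. Qed.

Lemma wiring_pair i M p : wiring_without i M -> p \in M ->
  exists2 s : 'I_I, s < i & exists2 x, x != inl s & p = [set inl s; x].
Proof.
case/and3P=> /pairingP[_ cM] /initiatedP iM _ pM.
by have [s si sp] := iM p pM; exists s => //; apply: pair_of_mem; rewrite ?cM.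
Qed.

Lemma bb_pairings_sub M : bb_pairings M \subset M.
Proof. by apply/subsetP=> p; rewrite inE => /andP[]. Qed.

Lemma bb_pairings_matching i M :
  wiring_without i M -> matching (early i) (late i) (bb_pairings M).
Proof.
move=> wM; case/and3P: (wM) => /pairingP[tM cM] _ /eqP covM.
apply/matchingP; split; first exact: trivIsetS (bb_pairings_sub M) tM.
  apply/subsetP=> -[a | w]; rewrite inE //= => ia.
  have aM : inl a \in cover M by rewrite covM !inE; apply: contraTneq ia => -[->]; rewrite ltnn.
  have pM := pblock_mem aM; have ap : inl a \in pblock M (inl a) by rewrite mem_pblock.
  have [s si [x _ def_p]] := wiring_pair wM pM.
  apply/bigcupP; exists (pblock M (inl a)) => //; rewrite inE pM /=.
  move: ap; rewrite def_p !inE => /orP[/eqP[as_] | /eqP <-]; first by rewrite as_ in ia; lia.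
  by apply/forall_inP=> y; rewrite !inE => /orP[] /eqP ->.
move=> p; rewrite inE => /andP[pM /forall_inP infp].
have [s si [x _ def_p]] := wiring_pair wM pM.
rewrite /anchored_pair cM // eqxx /=; apply/andP; split.
  apply/subsetP=> -[a | w] ap; last by have := infp _ ap.
  have : inl a \in cover M by apply/bigcupP; exists p.
  rewrite covM early_late !inE => ai; apply/imsetP; exists a => //.
  by rewrite !inE; apply: contraNneq ai => ->.
by apply/pred0Pn; exists (inl s); rewrite /= def_p !inE eqxx.
Qed.

Lemma card_pair_clean i M p : wiring_without i M -> p \in M ->
  #|p :&: clean| = (p \notin bb_pairings M).
Proof.
move=> wM pM; rewrite inE pM /=; have [s _ [[a | w] _ ->]] := wiring_pair wM pM.
  have -> : [set inl s; inl a] :&: clean = set0.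
    by apply/setP=> -[b | v]; rewrite !inE /= ?andbF ?andbT.
  rewrite cards0; apply/esym/eqP; rewrite eqb0 negbK.
  by apply/forall_inP=> x; rewrite !inE => /orP[] /eqP ->.
have -> : [set inl s; inr w] :&: clean = [set inr w].
  by apply/setP=> -[b | v]; rewrite !inE /= ?andbF ?andbT.
rewrite cards1.
apply/esym/eqP; rewrite eqb1; apply/negP=> /forall_inP/(_ (inr w)).
by rewrite !inE eqxx orbT => /(_ isT).
Qed.

Lemma card_bb_pairings i M : wiring_without i M -> #|bb_pairings M| = (I - S - 1) %/ 2.
Proof.
move=> wM; case/and3P: (wM) => /pairingP[tM cM] _ /eqP covM.
have twiceM := card_cover_pairs tM cM.
have coverM : #|cover M| = (I + S).-1 by rewrite covM cardsC1 card_sum !card_ord.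
have cleanM : \sum_(p in M) #|p :&: clean| = S.
  rewrite -card_cover_setI // (setIidPr _) ?card_clean // covM.
  by apply/subsetP=> -[a | w]; rewrite !inE.
have unbbM : \sum_(p in M) #|p :&: clean| = #|M :\: bb_pairings M|.
  rewrite -sum1_card big_mkcond [RHS]big_mkcond /=; apply: eq_bigr => p _.
  rewrite inE; case: (boolP (p \in M)) => pM; last by rewrite andbF.
  by rewrite (card_pair_clean wM pM) andbT; case: (_ \notin _).
have := subset_leq_card (bb_pairings_sub M); have := ltn_ord i.
move: unbbM; rewrite cleanM cardsD (setIidPr (bb_pairings_sub M)); lia.
Qed.

Definition unmatched i B := (early i :|: late i) :\: cover B.

Section Extension.
Variables (i : 'I_I) (B : {set {set dev}}).
Hypotheses (lt_SI : S < I) (oddIS : odd (I + S)).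
Hypotheses (mB : matching (early i) (late i) B) (cB : #|B| = (I - S - 1) %/ 2).

Lemma card_unmatched : #|unmatched i B| = S.
Proof.
case/matchingP: (mB) => tB _ aB.
have := card_cover_pairs tB (fun p pB => anchored_pair_card (aB p pB)).
rewrite /unmatched cardsD (setIidPr (matching_cover mB)) card_early_late cB.
have := odd_double_half (I + S); rewrite oddIS -muln2; lia.
Qed.

Lemma unmatched_early : unmatched i B \subset early i.
Proof.
case/matchingP: mB => _ LB _; apply/subsetP=> x; rewrite inE in_setU => /andP[xNB /orP[// | xL]].
by rewrite (subsetP LB _ xL) in xNB.
Qed.

(* The infected devices left over by [B] are paired with the clean ones along an
   arbitrary bijection. *)
Let u (w : 'I_S) : dev := enum_val (cast_ord (esym card_unmatched) w).

Let u_unmatched w : u w \in unmatched i B. Proof. exact: enum_valP. Qed.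

Let u_inj : injective u. Proof. by move=> v w /enum_val_inj/cast_ord_inj. Qed.

Let u_onto x : x \in unmatched i B -> exists w, u w = x.
Proof.
move=> xU; exists (cast_ord card_unmatched (enum_rank_in xU x)).
by rewrite /u cast_ordK enum_rankK_in.
Qed.

Let u_early w : exists2 a : 'I_I, a < i & u w = inl a.
Proof.
have := subsetP unmatched_early _ (u_unmatched w).
by case: (u w) => [a | v]; rewrite inE //; exists a.
Qed.

Let C := [set [set u w; inr w] | w : 'I_S].

Let u_neq_inr v w : u v != inr w.
Proof. by have [a _ ->] := u_early v. Qed.

Let cover_C : cover C = unmatched i B :|: clean.
Proof.
apply/setP=> x; rewrite cover_imset; apply/bigcupP/idP=> [[w _] | ].
  by rewrite in_set2 => /orP[] /eqP ->; rewrite in_setU ?u_unmatched // [_ \in clean]inE orbT.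
rewrite in_setU => /orP[/u_onto[w <-] | ]; first by exists w; rewrite ?inE ?eqxx.
by case: x => [a | w]; rewrite inE //= => _; exists w; rewrite // !inE eqxx orbT.
Qed.

Let trivIset_C : trivIset C.
Proof.
apply/trivIsetP=> _ _ /imsetP[v _ ->] /imsetP[w _ ->] vw.
have nvw : v != w by apply: contraNneq vw => ->.
rewrite -setI_eq0; apply/eqP/setP=> x; rewrite !inE; apply/negbTE.
apply/andP=> -[/orP[] /eqP -> /orP[] /eqP].
- by move/u_inj/eqP; rewrite (negbTE nvw).
- by move/eqP; rewrite (negbTE (u_neq_inr v w)).
- by move/esym/eqP; rewrite (negbTE (u_neq_inr w v)).
- by move=> [/eqP]; rewrite (negbTE nvw).
Qed.

Let pairing_extension : pairing (B :|: C).
Proof.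
case/matchingP: (mB) => tB _ aB; apply/pairingP; split.
  apply: trivIsetU => //; rewrite cover_C disjoint_sym disjoints_subset.
  apply/subsetP=> x; rewrite !inE => /orP[/andP[xNB _] // | xc].
  apply: contraTN xc => /(subsetP (matching_cover mB)).
  by case: x => [a | w]; rewrite !inE.
move=> p /setUP[/aB/anchored_pair_card // | /imsetP[w _ ->]].
by rewrite cards2 u_neq_inr.
Qed.

Let initiated_extension : initiated i (B :|: C).
Proof.
case/matchingP: (mB) => _ _ aB; apply/initiatedP=> p /setUP[/aB | /imsetP[w _ ->]].
  case/and3P=> _ _ /pred0Pn[[a | w] /andP[ap /=]]; rewrite inE // => ai.
  by exists a.
by have [a ai ua] := u_early w; exists a; rewrite // -ua !inE eqxx.
Qed.

Let cover_extension : cover (B :|: C) = [set~ inl i].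
Proof.
have covB := subsetP (matching_cover mB).
apply/setP=> x; rewrite /cover bigcup_setU -/(cover B) -/(cover C) cover_C !in_setU in_setD.
transitivity ((x \in early i :|: late i) || (x \in clean)).
  by case: (boolP (x \in cover B)) => [/covB -> | ] //=.
rewrite early_late; case: x => [a | w]; rewrite !inE /= ?orbT //.
by rewrite (mem_imset _ _ (@inl_inj _ _)) !inE orbF (inj_eq (@inl_inj _ _)).
Qed.

Let bb_pairings_extension : bb_pairings (B :|: C) = B.
Proof.
case/matchingP: (mB) => _ _ aB; apply/setP=> p; rewrite !inE.
case: (boolP (p \in B)) => [pB | pNB] /=.
  apply/forall_inP=> x xp; case/and3P: (aB p pB) => _ /subsetP/(_ x xp).
  by case: x {xp} => [a | w]; rewrite // !inE.
apply/negbTE; rewrite negb_and; case: (boolP (p \in C)) => //= /imsetP[w _ ->].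
by apply/forall_inP=> /(_ (inr w)); rewrite !inE eqxx orbT => /(_ isT).
Qed.

Lemma bb_extension : exists2 M, wiring_without i M & bb_pairings M = B.
Proof.
exists (B :|: C) => //.
by rewrite /wiring_without pairing_extension initiated_extension cover_extension eqxx.
Qed.

End Extension.

End Wirings.

Lemma N_dagger_nmatchings I S (i : 'I_I) : S < I -> odd (I + S) ->
  N_dagger I S i.+1 = nmatchings (early S i) (late S i) ((I - S - 1) %/ 2).
Proof.
move=> lt_SI oddIS; rewrite /N_dagger /= valK; apply: eq_card => B; rewrite !inE.
apply/existsP/andP=> [[M /andP[/andP[pM iNM] /eqP ->]] | [mB /eqP cB]].
  have wM := possible_wiring_without pM iNM.
  by rewrite (bb_pairings_matching wM) (card_bb_pairings wM).
have [M wM <-] := bb_extension lt_SI oddIS mB cB.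
by exists M; rewrite (wiring_without_possible wM) eqxx.
Qed.

Lemma N_dagger_formula I S h : S < I -> odd (I + S) -> 0 < h <= I ->
  let j := (I - S - 1) %/ 2 in
  N_dagger I S h =
    if I - h <= j then h.-1 ^_ (I - h) * npairings (h.-1 - (I - h)) (j - (I - h)) else 0.
Proof.
move=> lt_SI oddIS /andP[h_gt0 le_hI] j; have lt_hI : h.-1 < I by rewrite prednK.
rewrite -(prednK h_gt0) -[h.-1]/(Ordinal lt_hI : nat) N_dagger_nmatchings //.
rewrite nmatchings_formula ?disjoint_early_late // card_early card_late /=.
by rewrite (_ : I.-1 - h.-1 = I - h.-1.+1) //; lia.
Qed.

Lemma ffact_pred_prod h l : h.-1 ^_ l = \prod_(1 <= t < l.+1) (h - t).
Proof. by rewrite ffact_prod big_add1 /= big_mkord; apply: eq_bigr => t _; lia. Qed.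

Import GRing.Theory Num.Theory.
Local Open Scope ring_scope.

Lemma npairings_ratio (R : numFieldType) m k :
  (npairings m k)%:R = (k`!)%:R^-1 * \prod_(t < k) ('C(m - 2 * t, 2))%:R :> R.
Proof.
rewrite -natr_prod -npairings_prod natrM mulrA mulVf ?mul1r //.
by rewrite pnatr_eq0 -lt0n fact_gt0.
Qed.

Theorem lemma3 (I S j : nat) :
  (2 <= j)%N -> (S < I)%N -> odd (I + S) -> j = ((I - S - 1) %/ 2)%N ->
  [/\ ((N_dagger I S I)%:R = (j`!)%:R^-1 *
        \prod_(k < j) ('C(I - 1 - 2 * k, 2))%:R :> rat),
      ((N_dagger I S I.-1)%:R = ((j.-1)`!)%:R^-1 * (I - 2)%:R *
        \prod_(k < j.-1) ('C(I - 3 - 2 * k, 2))%:R :> rat),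
      (forall h, (S + 1 <= h)%N -> (h <= I - 2)%N ->
         [/\ ((j < I - h)%N -> N_dagger I S h = 0%N),
             (j = (I - h)%N -> (N_dagger I S h)%:R =
               ((j - (I - h))`!)%:R^-1 * \prod_(1 <= t < (I - h).+1) (h - t)%:R :> rat)
           & ((I - h < j)%N -> (N_dagger I S h)%:R =
               ((j - (I - h))`!)%:R^-1 * \prod_(1 <= t < (I - h).+1) (h - t)%:R *
               \prod_(1 <= t < (j - (I - h)).+1) ('C(2 * h - I - 1 - 2 * (t - 1), 2))%:R :> rat)])
    & (forall h, (1 <= h)%N -> (h <= S)%N -> N_dagger I S h = 0%N)].
Proof.
move=> j_ge2 lt_SI oddIS def_j.
have N_dE h : (0 < h <= I)%N -> N_dagger I S h = if (I - h <= j)%N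
    then (h.-1 ^_ (I - h) * npairings (h.-1 - (I - h)) (j - (I - h)))%N else 0%N.
  by move=> hI; rewrite def_j; apply: N_dagger_formula.
split.
- rewrite N_dE ?subnn ?leq0n ?ffactn0 ?mul1n ?subn0 ?npairings_ratio; last by lia.
  by congr (_ * _); apply: eq_bigr => k _; congr (_%:R); congr 'C(_, 2); lia.
- rewrite N_dE; last by lia.
  rewrite (_ : (I - I.-1 = 1)%N) ?ffactn1; last by lia.
  rewrite (_ : (1 <= j)%N) ?natrM ?npairings_ratio; last by lia.
  rewrite mulrCA mulrA (_ : (j - 1 = j.-1)%N); last by lia.
  congr (_ * _ * _); first by congr (_%:R); lia.
  by apply: eq_bigr => k _; congr (_%:R); congr 'C(_, 2); lia.
- move=> h h_gtS h_le; rewrite N_dE; last by lia.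
  split=> [lt_j | eq_j | gt_j].
  + by rewrite leqNgt lt_j.
  + by rewrite -eq_j leqnn subnn npairings0 muln1 ffact_pred_prod natr_prod fact0 invr1 mul1r.
  + rewrite (ltnW gt_j) natrM ffact_pred_prod natr_prod npairings_ratio mulrCA mulrA.
    congr (_ * _); rewrite big_add1 /= big_mkord.
    by apply: eq_bigr => t _; congr (_%:R); congr 'C(_, 2); lia.
- move=> h h_gt0 h_leS; rewrite N_dE; last by lia.
  by rewrite ifF //; apply/negbTE; rewrite -ltnNge; lia.
Qed.
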